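(* Let $x_0,y_0$ be positive integers and let $\{(X_t,Y_t)\}_{t\ge 0}$ be the CA competition process with fitness ratio $r=1$ started at $(X_0,Y_0)=(x_0,y_0)$. Let $T=\sup\{t\ge 0: X_t=Y_t\}$ (with $\sup\emptyset=-\infty$). Then, as $t\to\infty$ through the integers, \[ \mathbb{P}[T\ge t]\sim \frac{1}{2^{x_0+y_0-5/2}\sqrt{\pi}\,B(x_0,y_0)}\, t^{-1/2}, \] where $B(x,y)=\int_0^1 s^{x-1}(1-s)^{y-1}\,ds$ is the beta function.
   Context: The CA competition process with fitness ratio $r\ge 1$ started at $(x_0,y_0)$ is the discrete-time Markov chain $\{(X_t,Y_t)\}_{t\ge0}$ on $\{(x,y)\in\mathbb{Z}^2: x\ge1,y\ge1\}$ with $(X_0,Y_0)=(x_0,y_0)$ and transition probabilities: from $(x,y)$ it moves to $(x+1,y)$ with probability $\frac{rx}{rx+y}$ and to $(x,y+1)$ with probability $\frac{y}{rx+y}$. The notation $f(t)\sim g(t)$ means $\lim_{t\to\infty} f(t)/g(t)=1$. *)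

From Stdlib Require Import Reals List.
From Coquelicot Require Import Coquelicot.
Open Scope R_scope.

(* A finite trajectory of the CA competition process is encoded by its list of
   moves: [true] = the step (x,y) -> (x+1,y), [false] = (x,y) -> (x,y+1). *)

Fixpoint path_prob (r : R) (x y : nat) (l : list bool) : R :=
  match l with
  | nil => 1
  | true :: l' => (r * INR x / (r * INR x + INR y)) * path_prob r (S x) y l'
  | false :: l' => (INR y / (r * INR x + INR y)) * path_prob r x (S y) l'
  end.

(* [hits_from t x y l] : along the trajectory started at (x,y) with moves l,
   there is a time s with t <= s <= length l and X_s = Y_s. *)
Fixpoint hits_from (t x y : nat) (l : list bool) : bool :=
  (Nat.eqb t 0 && Nat.eqb x y) ||
  match l with
  | nil => false
  | true :: l' => hits_from (pred t) (S x) y l'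
  | false :: l' => hits_from (pred t) x (S y) l'
  end.

Fixpoint all_paths (N : nat) : list (list bool) :=
  match N with
  | O => nil :: nil
  | S N' => map (cons true) (all_paths N') ++ map (cons false) (all_paths N')
  end.

Definition prob_hit_between (r : R) (x0 y0 t N : nat) : R :=
  fold_right Rplus 0
    (map (fun l => path_prob r x0 y0 l * (if hits_from t x0 y0 l then 1 else 0))
         (all_paths N)).

(* P[T >= t] = P[ exists s >= t, X_s = Y_s ]
   = lim_{N -> oo} P[ exists s in [t,N], X_s = Y_s ]  (continuity from below). *)
Definition prob_T_ge (r : R) (x0 y0 t : nat) : R :=
  real (Lim_seq (fun N => prob_hit_between r x0 y0 t N)).

Definition Beta (x y : nat) : R :=
  RInt (fun s => s ^ (x - 1) * (1 - s) ^ (y - 1)) 0 1.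

(* With r = 1 the chain is a Polya urn. The function
   h(x,y) = 2 P[Bin(x+y-1, 1/2) >= max(x,y)] is harmonic off the diagonal and
   equal to 1 on it; it is the probability of ever reaching the diagonal, and
   P[T >= t] = E h(X_t, Y_t). As h - Ph vanishes off the diagonal and equals
   c_m = C(2m,m)/4^m at (m,m), the increments P[T >= t] - P[T >= t+1] are
   E[c_(X_t); X_t = Y_t]. The law of X_t is beta-binomial, so P[X_t = Y_t] is of
   order 1/t along the times of the right parity, with the constant 1/B(x0,y0)
   appearing explicitly, while Wallis' formula gives c_m ~ (pi m)^(-1/2). Summing
   these t^(-3/2) increments yields the t^(-1/2) tail. *)

From Stdlib Require Import Reals Lra Lia List.
From Coquelicot Require Import Coquelicot.
Open Scope R_scope.

(** * Binomial tails *)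

(* [binom_tail M s] is the number of subsets of a set of size [M] having at
   least [s] elements. *)
Fixpoint binom_tail (M s : nat) : R :=
  match M, s with
  | O, O => 1
  | O, S _ => 0
  | S M', O => 2 * binom_tail M' O
  | S M', S s' => binom_tail M' (S s') + binom_tail M' s'
  end.

Definition binom (M s : nat) : R := binom_tail M s - binom_tail M (S s).

Lemma binom_tail_0 M : binom_tail M 0 = 2 ^ M.
Proof. induction M as [|M IH]; simpl; [|rewrite IH]; ring. Qed.

Lemma binom_tail_large M s : (M < s)%nat -> binom_tail M s = 0.
Proof.
  revert s; induction M as [|M IH]; intros [|s] Hs; simpl; try lia; try reflexivity.
  rewrite !IH by lia. ring.
Qed.

Lemma binom_tail_ge0 M s : 0 <= binom_tail M s.
Proof.
  revert s; induction M as [|M IH]; intros [|s]; simpl; try lra.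
  - specialize (IH 0%nat); lra.
  - pose proof (IH (S s)); pose proof (IH s); lra.
Qed.

Lemma binom_tail_compl M s : (s <= S M)%nat ->
  binom_tail M s + binom_tail M (S M - s) = 2 ^ M.
Proof.
  revert s; induction M as [|M IH]; intros s Hs.
  - destruct s as [|[|s]]; simpl; lia || lra.
  - destruct s as [|s].
    + rewrite binom_tail_0, binom_tail_large by lia. ring.
    + destruct (Nat.eq_dec s (S M)) as [->|Hne].
      * rewrite Nat.sub_diag, binom_tail_0, binom_tail_large by lia. ring.
      * replace (S (S M) - S s)%nat with (S (M - s)) by lia.
        pose proof (IH (S s) ltac:(lia)) as H1.
        pose proof (IH s ltac:(lia)) as H2.
        replace (S M - S s)%nat with (M - s)%nat in H1 by lia.
        replace (S M - s)%nat with (S (M - s)) in H2 by lia.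
        simpl. lra.
Qed.

Lemma binom_pascal M s : binom (S M) (S s) = binom M (S s) + binom M s.
Proof. unfold binom; simpl; ring. Qed.

Lemma binom_0_S M : binom (S M) 0 = binom M 0.
Proof. unfold binom; simpl; ring. Qed.

Lemma binom_succ M s : INR (S s) * binom M (S s) = (INR M - INR s) * binom M s.
Proof.
  revert s; induction M as [|M IH]; intros s.
  - destruct s; unfold binom; simpl; ring.
  - destruct s as [|s].
    + rewrite binom_pascal, binom_0_S. pose proof (IH 0%nat) as H.
      rewrite S_INR in *. simpl in *.
      replace (match M with O => 1 | S _ => INR M + 1 end) with (INR M + 1)
        by (destruct M; simpl; lra).
      lra.
    + rewrite (binom_pascal M (S s)), (binom_pascal M s).
      pose proof (IH (S s)); pose proof (IH s). rewrite !S_INR in *. nra.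
Qed.

(** * The transition operator and the hitting probability *)

Definition px (x y : nat) : R := INR x / (INR x + INR y).
Definition py (x y : nat) : R := INR y / (INR x + INR y).

Definition step (f : nat -> nat -> R) (x y : nat) : R :=
  px x y * f (S x) y + py x y * f x (S y).

Lemma px_ge0 x y : 0 <= px x y.
Proof.
  unfold px. pose proof (pos_INR x); pose proof (pos_INR y).
  destruct (Req_dec (INR x + INR y) 0) as [E|E].
  - rewrite E; unfold Rdiv; rewrite Rinv_0; lra.
  - apply Rmult_le_pos; [lra|]. left; apply Rinv_0_lt_compat; lra.
Qed.

Lemma py_ge0 x y : 0 <= py x y.
Proof.
  unfold py. pose proof (pos_INR x); pose proof (pos_INR y).
  destruct (Req_dec (INR x + INR y) 0) as [E|E].
  - rewrite E; unfold Rdiv; rewrite Rinv_0; lra.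
  - apply Rmult_le_pos; [lra|]. left; apply Rinv_0_lt_compat; lra.
Qed.

Lemma px_py x y : (1 <= x + y)%nat -> px x y + py x y = 1.
Proof.
  intros H. unfold px, py.
  assert (0 < INR x + INR y) by (rewrite <- plus_INR; apply lt_0_INR; lia).
  field. lra.
Qed.

Lemma px_gt0 x y : (1 <= x)%nat -> 0 < px x y.
Proof.
  intros Hx. pose proof (lt_0_INR x ltac:(lia)); pose proof (pos_INR y).
  unfold px. apply Rdiv_lt_0_compat; lra.
Qed.

Lemma py_gt0 x y : (1 <= y)%nat -> 0 < py x y.
Proof.
  intros Hy. pose proof (pos_INR x); pose proof (lt_0_INR y ltac:(lia)).
  unfold py. apply Rdiv_lt_0_compat; lra.
Qed.

(* The probability of ever reaching the diagonal from (x,y), cf. the case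
   t = 0 of [prob_hit_between_lim]. *)
Definition hit_prob (x y : nat) : R :=
  2 * binom_tail (pred (x + y)) (Nat.max x y) / 2 ^ pred (x + y).

Definition central (m : nat) : R := binom (m + m) m / 2 ^ (m + m).

Lemma hit_prob_sym x y : hit_prob x y = hit_prob y x.
Proof. unfold hit_prob. rewrite Nat.add_comm, Nat.max_comm. reflexivity. Qed.

Lemma hit_prob_ge0 x y : 0 <= hit_prob x y.
Proof.
  unfold hit_prob. pose proof (binom_tail_ge0 (pred (x + y)) (Nat.max x y)).
  pose proof (pow_lt 2 (pred (x + y)) ltac:(lra)).
  apply Rdiv_le_0_compat; lra.
Qed.

Lemma hit_prob_diag m : (1 <= m)%nat -> hit_prob m m = 1.
Proof.
  intros Hm. unfold hit_prob. rewrite Nat.max_id.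
  pose proof (binom_tail_compl (pred (m + m)) m ltac:(lia)) as H.
  replace (S (pred (m + m)) - m)%nat with m in H by lia.
  pose proof (pow_lt 2 (pred (m + m)) ltac:(lra)).
  destruct (pred (m + m)) eqn:E; [lia|].
  apply (Rmult_eq_reg_r (2 ^ S n)); [|lra]. field_simplify; lra.
Qed.

Lemma hit_prob_next_diag m : hit_prob (S m) m = 1 - central m.
Proof.
  unfold hit_prob, central, binom.
  replace (pred (S m + m)) with (m + m)%nat by lia.
  replace (Nat.max (S m) m) with (S m) by lia.
  pose proof (binom_tail_compl (m + m) (S m) ltac:(lia)) as H.
  replace (S (m + m) - S m)%nat with m in H by lia.
  pose proof (pow_lt 2 (m + m) ltac:(lra)).
  apply (Rmult_eq_reg_r (2 ^ (m + m))); [|lra]. field_simplify; lra.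
Qed.

Lemma hit_prob_harmonic_gt x y : (y < x)%nat -> hit_prob x y = step hit_prob x y.
Proof.
  intros Hxy. destruct x as [|x]; [lia|].
  unfold step, px, py, hit_prob.
  replace (pred (S x + y)) with (x + y)%nat by lia.
  replace (pred (S (S x) + y)) with (S (x + y)) by lia.
  replace (pred (S x + S y)) with (S (x + y)) by lia.
  replace (Nat.max (S x) y) with (S x) by lia.
  replace (Nat.max (S (S x)) y) with (S (S x)) by lia.
  replace (Nat.max (S x) (S y)) with (S x) by lia.
  change (binom_tail (S (x + y)) (S (S x)))
    with (binom_tail (x + y) (S (S x)) + binom_tail (x + y) (S x)).
  change (binom_tail (S (x + y)) (S x))
    with (binom_tail (x + y) (S x) + binom_tail (x + y) x).
  pose proof (binom_succ (x + y) x) as Hb. unfold binom in Hb.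
  rewrite plus_INR in Hb. simpl pow. rewrite !S_INR in *.
  set (a := binom_tail (x + y) (S x)) in *.
  set (b := binom_tail (x + y) (S (S x))) in *.
  set (c := binom_tail (x + y) x) in *.
  pose proof (pow_lt 2 (x + y) ltac:(lra)). pose proof (pos_INR x). pose proof (pos_INR y).
  apply (Rmult_eq_reg_r (2 ^ (x + y) * (INR x + 1 + INR y))); [|nra].
  field_simplify; lra.
Qed.

Lemma hit_prob_harmonic x y : x <> y -> hit_prob x y = step hit_prob x y.
Proof.
  intros Hxy. destruct (Nat.lt_ge_cases y x) as [H|H].
  - now apply hit_prob_harmonic_gt.
  - rewrite hit_prob_sym, hit_prob_harmonic_gt by lia. unfold step, px, py.
    rewrite (hit_prob_sym (S y) x), (hit_prob_sym y (S x)), (Rplus_comm (INR y)). ring.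
Qed.

Lemma central_0 : central 0 = 1.
Proof. unfold central, binom. simpl. lra. Qed.

Lemma central_S m : central (S m) = central m * (2 * INR m + 1) / (2 * INR m + 2).
Proof.
  unfold central. replace (S m + S m)%nat with (S (S (m + m))) by lia.
  rewrite binom_pascal.
  pose proof (binom_succ (S (m + m)) m) as H1. rewrite binom_pascal in H1.
  pose proof (binom_succ (m + m) m) as H2.
  pose proof (binom_pascal (m + m) m) as H3.
  rewrite !S_INR, !plus_INR in *.
  pose proof (pow_lt 2 (m + m) ltac:(lra)). pose proof (pos_INR m).
  set (A := binom (m + m) m) in *. set (B := binom (m + m) (S m)) in *.
  set (D := binom (S (m + m)) m) in *.
  assert (HB : B = A * INR m / (INR m + 1))
    by (apply (Rmult_eq_reg_r (INR m + 1)); [|lra]; field_simplify; lra).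
  assert (HD : D = B + A) by nra.
  rewrite H3, HD, HB. simpl pow. field. lra.
Qed.

Lemma central_gt0 m : 0 < central m.
Proof.
  induction m as [|m IH]; [rewrite central_0; lra|].
  rewrite central_S. pose proof (pos_INR m).
  apply Rdiv_lt_0_compat; [apply Rmult_lt_0_compat|]; lra.
Qed.

Lemma central_sqr_le m : central m ^ 2 <= / (2 * INR m + 1).
Proof.
  induction m as [|m IH].
  - rewrite central_0; simpl; lra.
  - rewrite central_S, S_INR. pose proof (pos_INR m).
    replace ((central m * (2 * INR m + 1) / (2 * INR m + 2)) ^ 2)
      with (central m ^ 2 * ((2 * INR m + 1) ^ 2 / (2 * INR m + 2) ^ 2)) by (field; lra).
    apply Rle_trans with (/ (2 * INR m + 1) * ((2 * INR m + 1) ^ 2 / (2 * INR m + 2) ^ 2)).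
    + apply Rmult_le_compat_r; [|exact IH].
      apply Rdiv_le_0_compat; nra.
    + apply Rmult_le_reg_r with ((2 * INR m + 2) ^ 2 * (2 * (INR m + 1) + 1)); [nra|].
      field_simplify; lra.
Qed.

Lemma central_small eps : 0 < eps -> exists m, central m < eps.
Proof.
  intros He. destruct (archimed_cor1 (eps * eps) ltac:(nra)) as [m [Hm Hm0]].
  exists m. pose proof (central_sqr_le m). pose proof (central_gt0 m).
  pose proof (lt_0_INR m ltac:(lia)).
  assert (/ (2 * INR m + 1) < / INR m) by (apply Rinv_lt_contravar; nra).
  simpl in *. nra.
Qed.

Definition diag_defect (a b : nat) : R := if Nat.eq_dec a b then central a else 0.

Lemma diag_defect_ge0 a b : 0 <= diag_defect a b.
Proof. unfold diag_defect. destruct Nat.eq_dec; [left; apply central_gt0 | lra]. Qed.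

Lemma hit_prob_defect a b : (1 <= a)%nat -> (1 <= b)%nat ->
  hit_prob a b - step hit_prob a b = diag_defect a b.
Proof.
  intros Ha Hb. unfold diag_defect. destruct Nat.eq_dec as [<-|Hne].
  - rewrite hit_prob_diag by lia. unfold step, px, py.
    rewrite (hit_prob_sym a (S a)), hit_prob_next_diag.
    pose proof (lt_0_INR a ltac:(lia)).
    replace (INR a / (INR a + INR a)) with (/ 2) by (field; lra). lra.
  - rewrite <- hit_prob_harmonic by exact Hne. ring.
Qed.

Fixpoint expect (t : nat) (f : nat -> nat -> R) (x y : nat) : R :=
  match t with
  | O => f x y
  | S t' => step (expect t' f) x y
  end.

Lemma expect_S_step t f x y : expect (S t) f x y = expect t (step f) x y.
Proof.
  revert x y; induction t as [|t IH]; intros x y; [reflexivity|].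
  change (expect (S (S t)) f x y) with (step (expect (S t) f) x y).
  unfold step. rewrite !IH. reflexivity.
Qed.

Lemma expect_ext_quadrant t f f' x y :
  (forall a b, (x <= a)%nat -> (y <= b)%nat -> f a b = f' a b) ->
  expect t f x y = expect t f' x y.
Proof.
  revert x y; induction t as [|t IH]; intros x y H; simpl.
  - apply H; lia.
  - unfold step. rewrite (IH (S x) y), (IH x (S y)); [reflexivity| |];
      intros; apply H; lia.
Qed.

Lemma expect_le t f f' x y :
  (forall a b, (x <= a)%nat -> (y <= b)%nat -> f a b <= f' a b) ->
  expect t f x y <= expect t f' x y.
Proof.
  revert x y; induction t as [|t IH]; intros x y H; simpl.
  - apply H; lia.
  - unfold step. pose proof (px_ge0 x y); pose proof (py_ge0 x y).
    apply Rplus_le_compat; apply Rmult_le_compat_l; auto;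
      apply IH; intros; apply H; lia.
Qed.

Lemma expect_linear t f f' al be x y :
  expect t (fun a b => al * f a b + be * f' a b) x y
  = al * expect t f x y + be * expect t f' x y.
Proof.
  revert x y; induction t as [|t IH]; intros x y; simpl; [reflexivity|].
  unfold step. rewrite !IH. ring.
Qed.

Lemma expect_ge0 t f x y :
  (forall a b, (x <= a)%nat -> (y <= b)%nat -> 0 <= f a b) -> 0 <= expect t f x y.
Proof.
  intros H. replace 0 with (expect t (fun _ _ => 0) x y).
  - now apply expect_le.
  - clear H; revert x y; induction t as [|t IH]; intros x y; simpl; [reflexivity|].
    unfold step. rewrite !IH. ring.
Qed.

(* [hit_after t x y] = P[the chain from (x,y) visits the diagonal at some
   time >= t] (see [prob_T_ge_hit_after]). *)
Definition hit_after (t x y : nat) : R := expect t hit_prob x y.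

Lemma hit_after_S t x y : hit_after (S t) x y = step (hit_after t) x y.
Proof. reflexivity. Qed.

Lemma hit_after_ge0 t x y : 0 <= hit_after t x y.
Proof. apply expect_ge0. intros; apply hit_prob_ge0. Qed.

Lemma hit_after_drop t x y : (1 <= x)%nat -> (1 <= y)%nat ->
  hit_after t x y - hit_after (S t) x y = expect t diag_defect x y.
Proof.
  intros Hx Hy. unfold hit_after. rewrite expect_S_step.
  replace (expect t hit_prob x y - expect t (step hit_prob) x y)
    with (expect t (fun a b => 1 * hit_prob a b + (-1) * step hit_prob a b) x y)
    by (rewrite expect_linear; ring).
  apply expect_ext_quadrant. intros a b Ha Hb. rewrite <- hit_prob_defect by lia. ring.
Qed.

Lemma hit_after_S_le t x y : (1 <= x)%nat -> (1 <= y)%nat ->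
  hit_after (S t) x y <= hit_after t x y.
Proof.
  intros Hx Hy. pose proof (hit_after_drop t x y Hx Hy).
  pose proof (expect_ge0 t diag_defect x y (fun a b _ _ => diag_defect_ge0 a b)). lra.
Qed.

(* [polya t x y k] = P[X_t = x + k]: the law of X_t is beta-binomial. *)
Fixpoint polya (t x y k : nat) : R :=
  match t with
  | O => match k with O => 1 | S _ => 0 end
  | S t' => px x y * match k with O => 0 | S k' => polya t' (S x) y k' end
            + py x y * polya t' x (S y) k
  end.

Lemma polya_large t x y k : (t < k)%nat -> polya t x y k = 0.
Proof.
  revert x y k; induction t as [|t IH]; intros x y [|k] H; simpl; try lia; try reflexivity.
  rewrite !IH by lia. ring.
Qed.

Lemma sum_f_R0_scal (a : nat -> R) c N :
  sum_f_R0 (fun k => c * a k) N = c * sum_f_R0 a N.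
Proof. induction N as [|N IH]; simpl; [|rewrite IH]; ring. Qed.

Lemma sum_f_R0_add (a b : nat -> R) N :
  sum_f_R0 (fun k => a k + b k) N = sum_f_R0 a N + sum_f_R0 b N.
Proof. induction N as [|N IH]; simpl; [|rewrite IH]; ring. Qed.

Lemma sum_f_R0_shift (a : nat -> R) N :
  sum_f_R0 a (S N) = a 0%nat + sum_f_R0 (fun k => a (S k)) N.
Proof. induction N as [|N IH]; simpl in *; [|rewrite IH]; ring. Qed.

Lemma sum_f_R0_single (a : nat -> R) N k0 : (k0 <= N)%nat ->
  (forall k, (k <= N)%nat -> k <> k0 -> a k = 0) -> sum_f_R0 a N = a k0.
Proof.
  induction N as [|N IH]; intros Hk H.
  - now replace k0 with 0%nat by lia.
  - rewrite tech5. destruct (Nat.eq_dec k0 (S N)) as [->|Hne].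
    + rewrite sum_eq_R0; [ring|]. intros n Hn. apply H; lia.
    + rewrite IH, (H (S N)) by (lia || (intros; apply H; lia)). ring.
Qed.

Lemma expect_polya t f x y :
  expect t f x y = sum_f_R0 (fun k => polya t x y k * f (x + k)%nat (y + (t - k))%nat) t.
Proof.
  revert x y; induction t as [|t IH]; intros x y.
  - simpl. rewrite !Nat.add_0_r. ring.
  - simpl expect. unfold step. rewrite !IH.
    transitivity
      (sum_f_R0 (fun k => px x y * match k with O => 0 | S k' => polya t (S x) y k' end
                          * f (x + k)%nat (y + (S t - k))%nat) (S t)
       + sum_f_R0 (fun k => py x y * polya t x (S y) k * f (x + k)%nat (y + (S t - k))%nat) (S t)).
    + f_equal.
      * rewrite sum_f_R0_shift, <- sum_f_R0_scal, Rmult_0_r, Rmult_0_l, Rplus_0_l.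
        apply sum_eq. intros i Hi.
        replace (x + S i)%nat with (S x + i)%nat by lia.
        replace (S t - S i)%nat with (t - i)%nat by lia. ring.
      * rewrite tech5, (polya_large t x (S y) (S t)) by lia.
        rewrite Rmult_0_r, Rmult_0_l, Rplus_0_r, <- sum_f_R0_scal.
        apply sum_eq. intros i Hi.
        replace (y + (S t - i))%nat with (S y + (t - i))%nat by lia. ring.
    + rewrite <- sum_f_R0_add. apply sum_eq. intros [|i] Hi; simpl polya; ring.
Qed.

Notation fct n := (INR (Factorial.fact n)).

Lemma fct_gt0 n : 0 < fct n.
Proof. apply lt_0_INR, Factorial.lt_O_fact. Qed.

Fixpoint rising (x k : nat) : R :=
  match k with O => 1 | S k' => INR x * rising (S x) k' end.

Lemma rising_fact x k : rising (S x) k * fct x = fct (x + k).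
Proof.
  revert x; induction k as [|k IH]; intros x.
  - simpl. rewrite Nat.add_0_r. ring.
  - change (rising (S x) (S k)) with (INR (S x) * rising (S (S x)) k).
    replace (x + S k)%nat with (S x + k)%nat by lia.
    rewrite <- IH, fact_simpl, mult_INR. ring.
Qed.

Lemma rising_gt0 x k : (1 <= x)%nat -> 0 < rising x k.
Proof.
  revert x; induction k as [|k IH]; intros x Hx; simpl; [lra|].
  apply Rmult_lt_0_compat; [apply lt_0_INR; lia | apply IH; lia].
Qed.

Lemma C_n_0 n : Binomial.C n 0 = 1.
Proof. unfold Binomial.C. rewrite Nat.sub_0_r. simpl. pose proof (fct_gt0 n). field. lra. Qed.

Lemma C_n_n n : Binomial.C n n = 1.
Proof. unfold Binomial.C. rewrite Nat.sub_diag. simpl. pose proof (fct_gt0 n). field. lra. Qed.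

Lemma polya_closed t x y k : (1 <= x + y)%nat -> (k <= t)%nat ->
  polya t x y k = Binomial.C t k * rising x k * rising y (t - k) / rising (x + y) t.
Proof.
  revert x y k; induction t as [|t IH]; intros x y k Hxy Hk.
  - replace k with 0%nat by lia. simpl. rewrite C_n_0. field.
  - assert (0 < INR x + INR y) by (rewrite <- plus_INR; apply lt_0_INR; lia).
    pose proof (rising_gt0 (S (x + y)) t ltac:(lia)).
    replace (rising (x + y) (S t)) with ((INR x + INR y) * rising (S (x + y)) t)
      by (simpl; rewrite plus_INR; ring).
    simpl polya. unfold px, py.
    replace (S x + y)%nat with (S (x + y)) by lia.
    replace (x + S y)%nat with (S (x + y)) by lia.
    destruct k as [|k].
    + rewrite IH, !C_n_0 by lia. simpl rising.
      replace (x + S y)%nat with (S (x + y)) by lia.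
      rewrite Nat.sub_0_r. field. lra.
    + destruct (Nat.eq_dec k t) as [->|Hne].
      * rewrite (polya_large t x (S y) (S t)), IH, !C_n_n, !Nat.sub_diag by lia.
        simpl rising. replace (S x + y)%nat with (S (x + y)) by lia. field. lra.
      * rewrite !IH by lia.
        replace (S x + y)%nat with (S (x + y)) by lia.
        replace (x + S y)%nat with (S (x + y)) by lia.
        replace (S t - S k)%nat with (t - k)%nat by lia.
        replace (t - k)%nat with (S (t - S k)) by lia.
        rewrite <- (pascal t k) by lia.
        simpl rising. field. lra.
Qed.

Lemma expect_diag_defect_at t x y k : (k <= t)%nat -> (x + k = y + (t - k))%nat ->
  expect t diag_defect x y = polya t x y k * central (x + k).
Proof.
  intros Hk Hd. rewrite expect_polya, (sum_f_R0_single _ _ k Hk).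
  - unfold diag_defect. destruct Nat.eq_dec; [reflexivity | lia].
  - intros j Hj Hne. unfold diag_defect. destruct Nat.eq_dec; [lia | ring].
Qed.

Lemma expect_diag_defect_none t x y :
  (forall k, (k <= t)%nat -> (x + k <> y + (t - k))%nat) -> expect t diag_defect x y = 0.
Proof.
  intros H. rewrite expect_polya. apply sum_eq_R0. intros k Hk.
  unfold diag_defect. destruct Nat.eq_dec as [E|]; [now destruct (H k Hk) | ring].
Qed.

Lemma polya_1_1 t k : (k <= t)%nat -> polya t 1 1 k = / INR (S t).
Proof.
  intros Hk. rewrite polya_closed by lia. unfold Binomial.C.
  pose proof (rising_fact 0 k) as H1. pose proof (rising_fact 0 (t - k)) as H2.
  assert (H3 : rising 2 t = INR (S t) * fct t).
  { pose proof (rising_fact 1 t) as H. change (1 + t)%nat with (S t) in H.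
    rewrite (fact_simpl t), mult_INR in H. change (fct 1) with 1 in H. lra. }
  simpl in H1, H2. change (1 + 1)%nat with 2%nat.
  rewrite Rmult_1_r in H1, H2. rewrite H1, H2, H3.
  pose proof (fct_gt0 t); pose proof (fct_gt0 k); pose proof (fct_gt0 (t - k)).
  pose proof (lt_0_INR (S t) ltac:(lia)).
  field. repeat split; lra.
Qed.

Lemma hit_after_1_1 K : hit_after (2 * K) 1 1 = central K.
Proof.
  induction K as [|K IH].
  - unfold hit_after. simpl. rewrite hit_prob_diag, central_0 by lia. reflexivity.
  - pose proof (hit_after_drop (2 * K) 1 1 ltac:(lia) ltac:(lia)) as H1.
    pose proof (hit_after_drop (S (2 * K)) 1 1 ltac:(lia) ltac:(lia)) as H2.
    rewrite (expect_diag_defect_at _ _ _ K), polya_1_1 in H1 by lia.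
    rewrite expect_diag_defect_none in H2 by (intros; lia).
    replace (2 * S K)%nat with (S (S (2 * K))) by lia.
    replace (1 + K)%nat with (S K) in H1 by lia.
    rewrite central_S, S_INR, mult_INR, IH in H1. rewrite central_S.
    pose proof (pos_INR K). simpl (INR 2) in H1. replace (1 + 1) with 2 in H1 by ring.
    replace (/ (2 * INR K + 1) * (central K * (2 * INR K + 1) / (2 * INR K + 2)))
      with (central K / (2 * INR K + 2)) in H1 by (field; lra).
    replace (central K * (2 * INR K + 1) / (2 * INR K + 2))
      with (central K - central K / (2 * INR K + 2)) by (field; lra).
    lra.
Qed.

Lemma is_lim_seq_0_nonincr (u : nat -> R) :
  (forall t, 0 <= u t) -> (forall t, u (S t) <= u t) ->
  (forall eps, 0 < eps -> exists t, u t < eps) -> is_lim_seq u 0.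
Proof.
  intros H0 Hd He. apply is_lim_seq_spec. intros eps.
  destruct (He eps (cond_pos eps)) as [t0 Ht0]. exists t0. intros n Hn.
  assert (u n <= u t0) by (induction Hn; [lra | pose proof (Hd m); lra]).
  rewrite Rminus_0_r, Rabs_pos_eq by apply H0. lra.
Qed.

Lemma is_lim_seq_0_dominated (u v : nat -> R) c :
  (forall t, 0 <= u t <= c * v (S t)) -> is_lim_seq v 0 -> is_lim_seq u 0.
Proof.
  intros H Hv. apply is_lim_seq_le_le with (fun _ => 0) (fun t => c * v (S t)); auto.
  - apply is_lim_seq_const.
  - replace (Finite 0) with (Rbar_mult c 0) by (simpl; f_equal; ring).
    apply is_lim_seq_scal_l. now apply (is_lim_seq_incr_1 v).
Qed.

Lemma hit_after_1_1_lim : is_lim_seq (fun t => hit_after t 1 1) 0.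
Proof.
  apply is_lim_seq_0_nonincr.
  - intros; apply hit_after_ge0.
  - intros; apply hit_after_S_le; lia.
  - intros eps He. destruct (central_small eps He) as [K HK].
    exists (2 * K)%nat. now rewrite hit_after_1_1.
Qed.

Lemma hit_after_lim x y : (1 <= x)%nat -> (1 <= y)%nat ->
  is_lim_seq (fun t => hit_after t x y) 0.
Proof.
  assert (Hx1 : forall y, (1 <= y)%nat -> is_lim_seq (fun t => hit_after t 1 y) 0).
  { intros y' Hy'. induction Hy' as [|m Hm IH]; [exact hit_after_1_1_lim|].
    pose proof (py_gt0 1 m ltac:(lia)).
    refine (is_lim_seq_0_dominated _ _ (/ py 1 m) _ IH).
    intros t; split; [apply hit_after_ge0|].
    rewrite hit_after_S. unfold step.
    pose proof (px_ge0 1 m). pose proof (hit_after_ge0 t 2 m).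
    apply Rmult_le_reg_l with (py 1 m); [lra|]. field_simplify; [nra | lra]. }
  intros Hx Hy. induction Hx as [|m Hm IH]; [now apply Hx1|].
  pose proof (px_gt0 m y ltac:(lia)).
  refine (is_lim_seq_0_dominated _ _ (/ px m y) _ IH).
  intros t; split; [apply hit_after_ge0|].
  rewrite hit_after_S. unfold step.
  pose proof (py_ge0 m y). pose proof (hit_after_ge0 t m (S y)).
  apply Rmult_le_reg_l with (px m y); [lra|]. field_simplify; [nra | lra].
Qed.

(** * Sums over paths *)

Definition sum_paths (F : list bool -> R) (N : nat) : R :=
  fold_right Rplus 0 (map F (all_paths N)).

Lemma fold_right_Rplus_app (l1 l2 : list R) :
  fold_right Rplus 0 (l1 ++ l2) = fold_right Rplus 0 l1 + fold_right Rplus 0 l2.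
Proof. induction l1 as [|a l1 IH]; simpl; [|rewrite IH]; ring. Qed.

Lemma sum_paths_S F N :
  sum_paths F (S N) = sum_paths (fun l => F (true :: l)) N + sum_paths (fun l => F (false :: l)) N.
Proof. unfold sum_paths. simpl. rewrite map_app, fold_right_Rplus_app, !map_map. reflexivity. Qed.

Lemma sum_paths_ext F G N : (forall l, F l = G l) -> sum_paths F N = sum_paths G N.
Proof.
  intros H. unfold sum_paths.
  induction (all_paths N) as [|l L IH]; simpl; [|rewrite IH, H]; reflexivity.
Qed.

Lemma sum_paths_scal F c N : sum_paths (fun l => c * F l) N = c * sum_paths F N.
Proof.
  unfold sum_paths. induction (all_paths N) as [|l L IH]; simpl; [|rewrite IH]; ring.
Qed.

Lemma path_prob_true x y l : path_prob 1 x y (true :: l) = px x y * path_prob 1 (S x) y l.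
Proof. simpl. unfold px. rewrite Rmult_1_l. reflexivity. Qed.

Lemma path_prob_false x y l : path_prob 1 x y (false :: l) = py x y * path_prob 1 x (S y) l.
Proof. simpl. unfold py. rewrite Rmult_1_l. reflexivity. Qed.

Lemma sum_paths_path_prob N x y : (1 <= x + y)%nat -> sum_paths (path_prob 1 x y) N = 1.
Proof.
  revert x y; induction N as [|N IH]; intros x y H.
  - unfold sum_paths. simpl. ring.
  - rewrite sum_paths_S.
    rewrite (sum_paths_ext _ (fun l => px x y * path_prob 1 (S x) y l)) by apply path_prob_true.
    rewrite (sum_paths_ext (fun l => path_prob 1 x y (false :: l))
               (fun l => py x y * path_prob 1 x (S y) l)) by apply path_prob_false.
    rewrite !sum_paths_scal, !IH, !Rmult_1_r by lia. now apply px_py.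
Qed.

Lemma prob_hit_between_0 t x y :
  prob_hit_between 1 x y t 0 = if (Nat.eqb t 0 && Nat.eqb x y)%bool then 1 else 0.
Proof.
  unfold prob_hit_between. simpl. rewrite Bool.orb_false_r. destruct (_ && _)%bool; ring.
Qed.

Lemma prob_hit_between_sum_paths r x y t N :
  prob_hit_between r x y t N
  = sum_paths (fun l => path_prob r x y l * (if hits_from t x y l then 1 else 0)) N.
Proof. reflexivity. Qed.

(* Once the diagonal is reached at a time >= t the event is certain, and only
   the total mass of the remaining paths matters. *)
Lemma prob_hit_between_S t x y N : (1 <= x + y)%nat ->
  prob_hit_between 1 x y t (S N) =
  if (Nat.eqb t 0 && Nat.eqb x y)%bool then 1
  else step (fun a b => prob_hit_between 1 a b (pred t) N) x y.
Proof.
  intros H. unfold step. rewrite !prob_hit_between_sum_paths, sum_paths_S.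
  destruct (Nat.eqb t 0 && Nat.eqb x y)%bool eqn:Eb.
  - rewrite (sum_paths_ext _ (fun l => px x y * path_prob 1 (S x) y l)),
      (sum_paths_ext (fun l => path_prob 1 x y (false :: l) * _)
         (fun l => py x y * path_prob 1 x (S y) l)).
    + rewrite !sum_paths_scal, !sum_paths_path_prob, !Rmult_1_r by lia. now apply px_py.
    + intros l. rewrite path_prob_false. simpl hits_from. rewrite Eb. simpl. ring.
    + intros l. rewrite path_prob_true. simpl hits_from. rewrite Eb. simpl. ring.
  - rewrite <- !sum_paths_scal. f_equal; apply sum_paths_ext; intros l.
    + rewrite path_prob_true. simpl hits_from. rewrite Eb. simpl. ring.
    + rewrite path_prob_false. simpl hits_from. rewrite Eb. simpl. ring.
Qed.

Lemma prob_hit_from_0_le_hit_prob L x y : (1 <= x)%nat -> (1 <= y)%nat ->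
  prob_hit_between 1 x y 0 L <= hit_prob x y.
Proof.
  revert x y; induction L as [|L IH]; intros x y Hx Hy.
  - rewrite prob_hit_between_0. simpl. destruct (Nat.eqb_spec x y) as [<-|].
    + rewrite hit_prob_diag by lia. lra.
    + apply hit_prob_ge0.
  - rewrite prob_hit_between_S by lia. simpl. destruct (Nat.eqb_spec x y) as [<-|Hne].
    + rewrite hit_prob_diag by lia. lra.
    + rewrite (hit_prob_harmonic x y Hne). unfold step.
      pose proof (px_ge0 x y); pose proof (py_ge0 x y).
      pose proof (IH (S x) y ltac:(lia) Hy); pose proof (IH x (S y) Hx ltac:(lia)).
      apply Rplus_le_compat; apply Rmult_le_compat_l; auto.
Qed.

Lemma hit_prob_sub_prob_hit_from_0_le L x y : (1 <= x)%nat -> (1 <= y)%nat ->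
  hit_prob x y - prob_hit_between 1 x y 0 L <= hit_after L x y.
Proof.
  revert x y; induction L as [|L IH]; intros x y Hx Hy.
  - rewrite prob_hit_between_0. unfold hit_after. simpl.
    destruct (Nat.eqb x y); lra.
  - rewrite prob_hit_between_S by lia. simpl. destruct (Nat.eqb_spec x y) as [<-|Hne].
    + rewrite hit_prob_diag by lia. pose proof (hit_after_ge0 (S L) x x). lra.
    + rewrite (hit_prob_harmonic x y Hne), hit_after_S. unfold step.
      pose proof (px_ge0 x y); pose proof (py_ge0 x y).
      pose proof (IH (S x) y ltac:(lia) Hy); pose proof (IH x (S y) Hx ltac:(lia)).
      assert (px x y * (hit_prob (S x) y - prob_hit_between 1 (S x) y 0 L)
              <= px x y * hit_after L (S x) y) by (apply Rmult_le_compat_l; auto).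
      assert (py x y * (hit_prob x (S y) - prob_hit_between 1 x (S y) 0 L)
              <= py x y * hit_after L x (S y)) by (apply Rmult_le_compat_l; auto).
      lra.
Qed.

Lemma prob_hit_between_lim t x y : (1 <= x)%nat -> (1 <= y)%nat ->
  is_lim_seq (fun N => prob_hit_between 1 x y t N) (hit_after t x y).
Proof.
  revert x y; induction t as [|t IH]; intros x y Hx Hy.
  - apply is_lim_seq_le_le with (fun L => hit_prob x y - hit_after L x y) (fun _ => hit_prob x y).
    + intros L. pose proof (hit_prob_sub_prob_hit_from_0_le L x y Hx Hy).
      pose proof (prob_hit_from_0_le_hit_prob L x y Hx Hy). lra.
    + change (hit_after 0 x y) with (hit_prob x y).
      replace (Finite (hit_prob x y)) with (Finite (hit_prob x y - 0)) by (f_equal; ring).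
      apply is_lim_seq_minus'; [apply is_lim_seq_const | now apply hit_after_lim].
    + apply is_lim_seq_const.
  - apply is_lim_seq_incr_1.
    apply is_lim_seq_ext with (fun N => step (fun a b => prob_hit_between 1 a b t N) x y).
    { intros N. rewrite prob_hit_between_S by lia. reflexivity. }
    rewrite hit_after_S. unfold step.
    apply is_lim_seq_plus'; apply is_lim_seq_mult'; try apply is_lim_seq_const; apply IH; lia.
Qed.

Lemma prob_T_ge_hit_after t x y : (1 <= x)%nat -> (1 <= y)%nat ->
  prob_T_ge 1 x y t = hit_after t x y.
Proof.
  intros Hx Hy. unfold prob_T_ge.
  now rewrite (is_lim_seq_unique _ _ (prob_hit_between_lim t x y Hx Hy)).
Qed.

(** * Wallis' formula *)

Definition wallis_int (n : nat) : R := RInt (fun x => sin x ^ n) 0 (PI / 2).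

Lemma ex_RInt_sin_pow n : ex_RInt (fun x => sin x ^ n) 0 (PI / 2).
Proof.
  apply (@ex_RInt_continuous R_CompleteNormedModule). intros z _.
  apply (@ex_derive_continuous R_AbsRing R_NormedModule). auto_derive. trivial.
Qed.

Lemma wallis_int_0 : wallis_int 0 = PI / 2.
Proof.
  unfold wallis_int. simpl. rewrite RInt_const.
  unfold scal; simpl; unfold mult; simpl. ring.
Qed.

Lemma wallis_int_1 : wallis_int 1 = 1.
Proof.
  unfold wallis_int. apply is_RInt_unique.
  replace 1 with (minus ((fun x => - cos x) (PI / 2)) ((fun x => - cos x) 0))
    by (simpl; rewrite cos_PI2, cos_0; unfold minus, plus, opp; simpl; ring).
  apply (@is_RInt_derive R_CompleteNormedModule (fun x => - cos x)).
  - intros x _. auto_derive; [trivial | ring].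
  - intros x _. apply (@ex_derive_continuous R_AbsRing R_NormedModule). auto_derive. trivial.
Qed.

(* Integration by parts against the primitive [sin ^ (n+1) * cos]. *)
Lemma wallis_int_SS n : INR (S (S n)) * wallis_int (S (S n)) = INR (S n) * wallis_int n.
Proof.
  set (F x := INR (S n) * sin x ^ n - INR (S (S n)) * sin x ^ S (S n)).
  assert (H0 : is_RInt F 0 (PI / 2) 0).
  { assert (HH := @is_RInt_derive R_CompleteNormedModule
                    (fun x => sin x ^ S n * cos x) F 0 (PI / 2)).
    replace (minus _ _) with 0 in HH
      by (simpl; rewrite cos_PI2, sin_0; unfold minus, plus, opp; simpl; ring).
    apply HH.
    - intros x _. unfold F. auto_derive; [trivial|].
      rewrite !S_INR. simpl. pose proof (sin2_cos2 x) as Hsc. unfold Rsqr in Hsc.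
      replace (match n with O => 1 | S _ => INR n + 1 end) with (INR n + 1)
        by (destruct n; simpl; ring).
      replace (1 * cos x * ((INR n + 1) * sin x ^ n) * cos x)
        with ((INR n + 1) * sin x ^ n * (cos x * cos x)) by ring.
      replace (cos x * cos x) with (1 - sin x * sin x) by lra. ring.
    - intros x _. apply (@ex_derive_continuous R_AbsRing R_NormedModule).
      unfold F. auto_derive. trivial. }
  assert (H1 : is_RInt F 0 (PI / 2)
                 (INR (S n) * wallis_int n - INR (S (S n)) * wallis_int (S (S n)))).
  { apply (is_RInt_minus (fun x => INR (S n) * sin x ^ n)
                         (fun x => INR (S (S n)) * sin x ^ S (S n))).
    - apply (is_RInt_scal (fun x => sin x ^ n)).
      apply (@RInt_correct R_CompleteNormedModule), ex_RInt_sin_pow.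
    - apply (is_RInt_scal (fun x => sin x ^ S (S n))).
      apply (@RInt_correct R_CompleteNormedModule), ex_RInt_sin_pow. }
  pose proof (is_RInt_unique _ _ _ _ H0). pose proof (is_RInt_unique _ _ _ _ H1). lra.
Qed.

Lemma wallis_int_S_le n : wallis_int (S n) <= wallis_int n.
Proof.
  pose proof PI_RGT_0.
  unfold wallis_int. apply RInt_le; [lra | apply ex_RInt_sin_pow | apply ex_RInt_sin_pow|].
  intros x Hx. assert (0 <= sin x) by (apply sin_ge_0; lra). pose proof (SIN_bound x).
  pose proof (pow_le (sin x) n ltac:(assumption)). simpl. nra.
Qed.

Lemma wallis_int_even k : wallis_int (2 * k) = PI / 2 * central k.
Proof.
  induction k as [|k IH]; [change (2 * 0)%nat with 0%nat; rewrite wallis_int_0, central_0; lra|].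
  replace (2 * S k)%nat with (S (S (2 * k))) by lia.
  pose proof (wallis_int_SS (2 * k)) as H. rewrite IH in H.
  apply (Rmult_eq_reg_l (INR (S (S (2 * k))))); [|apply not_0_INR; lia].
  rewrite H, central_S, !S_INR, mult_INR. simpl (INR 2). pose proof (pos_INR k).
  field. lra.
Qed.

Lemma wallis_int_odd k : wallis_int (S (2 * k)) = / ((2 * INR k + 1) * central k).
Proof.
  induction k as [|k IH].
  - change (S (2 * 0)) with 1%nat. rewrite wallis_int_1, central_0. simpl. field.
  - replace (S (2 * S k)) with (S (S (S (2 * k)))) by lia.
    pose proof (central_gt0 k). pose proof (pos_INR k).
    pose proof (wallis_int_SS (S (2 * k))) as HW. rewrite IH in HW.
    apply (Rmult_eq_reg_l (INR (S (S (S (2 * k)))))); [|apply not_0_INR; lia].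
    rewrite HW, central_S, !S_INR, mult_INR. simpl (INR 2). field. split; lra.
Qed.

Lemma is_lim_seq_inv_affine (a b : R) : 0 < a -> is_lim_seq (fun k => / (a * INR k + b)) 0.
Proof.
  intros Ha. replace (Finite 0) with (Rbar_inv p_infty) by reflexivity.
  apply is_lim_seq_inv; [|discriminate].
  apply is_lim_seq_plus with p_infty b; [| apply is_lim_seq_const | reflexivity].
  replace p_infty with (Rbar_mult a p_infty)
    by (simpl; destruct (Rle_dec 0 a); [destruct (Rle_lt_or_eq_dec 0 a r) |]; easy || lra).
  apply is_lim_seq_scal_l, is_lim_seq_INR.
Qed.

Lemma is_lim_seq_sqrt (u : nat -> R) (l : R) :
  is_lim_seq u l -> is_lim_seq (fun n => sqrt (u n)) (sqrt l).
Proof. intros H. eapply filterlim_comp; [exact H | apply continuous_sqrt]. Qed.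

Lemma pi_central_sqr_lower k : 2 <= PI * (2 * INR k + 1) * central k ^ 2.
Proof.
  pose proof (wallis_int_S_le (2 * k)) as H.
  rewrite wallis_int_even, wallis_int_odd in H.
  pose proof (central_gt0 k) as Hc. pose proof (pos_INR k).
  apply Rmult_le_compat_l with (r := 2 * (2 * INR k + 1) * central k) in H; [|nra].
  replace (2 * (2 * INR k + 1) * central k * / ((2 * INR k + 1) * central k)) with 2 in H
    by (field; nra).
  simpl. nra.
Qed.

Lemma pi_central_sqr_upper k : PI * (2 * INR k + 1) ^ 2 * central k ^ 2 <= 2 * (2 * INR k + 2).
Proof.
  pose proof (wallis_int_S_le (S (2 * k))) as H.
  replace (S (S (2 * k))) with (2 * S k)%nat in H by lia.
  rewrite wallis_int_even, wallis_int_odd, central_S in H.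
  pose proof (central_gt0 k) as Hc. pose proof (pos_INR k).
  apply Rmult_le_compat_l with (r := 2 * (2 * INR k + 1) * central k * (2 * INR k + 2)) in H;
    [|nra].
  replace (2 * (2 * INR k + 1) * central k * (2 * INR k + 2)
           * (PI / 2 * (central k * (2 * INR k + 1) / (2 * INR k + 2))))
    with (PI * (2 * INR k + 1) ^ 2 * central k ^ 2) in H by (field; lra).
  replace (2 * (2 * INR k + 1) * central k * (2 * INR k + 2) * / ((2 * INR k + 1) * central k))
    with (2 * (2 * INR k + 2)) in H by (field; nra).
  exact H.
Qed.

Lemma central_sqr_lim : is_lim_seq (fun k => INR k * PI * central k ^ 2) 1.
Proof.
  apply is_lim_seq_le_le with (fun k => 1 - / (2 * INR k + 1)) (fun _ => 1).
  - intros k. pose proof PI_RGT_0. pose proof (pos_INR k). split.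
    + pose proof (pi_central_sqr_lower k).
      apply Rmult_le_reg_r with (2 * INR k + 1); [lra|].
      replace ((1 - / (2 * INR k + 1)) * (2 * INR k + 1)) with (2 * INR k) by (field; lra).
      nra.
    + destruct k as [|k]; [simpl; lra|].
      pose proof (pi_central_sqr_upper k). pose proof (pos_INR k).
      rewrite central_S, S_INR.
      replace ((INR k + 1) * PI * (central k * (2 * INR k + 1) / (2 * INR k + 2)) ^ 2)
        with (PI * (2 * INR k + 1) ^ 2 * central k ^ 2 / (2 * (2 * INR k + 2))) by (field; lra).
      apply Rmult_le_reg_r with (2 * (2 * INR k + 2)); [lra|].
      field_simplify; lra.
  - replace (Finite 1) with (Finite (1 - 0)) by (f_equal; ring).
    apply is_lim_seq_minus'; [apply is_lim_seq_const | apply is_lim_seq_inv_affine; lra].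
  - apply is_lim_seq_const.
Qed.

Lemma central_sqrt_lim : is_lim_seq (fun k => central k * sqrt (INR k)) (/ sqrt PI).
Proof.
  pose proof PI_RGT_0. pose proof (sqrt_lt_R0 PI ltac:(lra)).
  apply is_lim_seq_ext with (fun k => sqrt (INR k * PI * central k ^ 2) * / sqrt PI).
  - intros k. pose proof (central_gt0 k). pose proof (pos_INR k).
    rewrite !sqrt_mult_alt by (try apply Rmult_le_pos; lra).
    rewrite sqrt_pow2 by lra. field. lra.
  - replace (Finite (/ sqrt PI)) with (Finite (sqrt 1 * / sqrt PI))
      by (rewrite sqrt_1; f_equal; ring).
    apply is_lim_seq_mult'; [apply is_lim_seq_sqrt, central_sqr_lim | apply is_lim_seq_const].
Qed.

(** * Diagonal visits *)

Lemma filterlim_affine_nat (m c : nat) : (1 <= m)%nat ->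
  filterlim (fun q => m * q + c)%nat eventually eventually.
Proof. intros Hm P [N HN]. exists N. intros q Hq. apply HN. nia. Qed.

Lemma is_lim_seq_affine_subseq (u : nat -> R) (l : Rbar) (m c : nat) : (1 <= m)%nat ->
  is_lim_seq u l -> is_lim_seq (fun q => u (m * q + c)%nat) l.
Proof. intros Hm. apply is_lim_seq_subseq, filterlim_affine_nat, Hm. Qed.

Definition fact_ratio (c q : nat) : R := fct (q + c) / (fct q * INR q ^ c).

Lemma fact_ratio_lim c : is_lim_seq (fact_ratio c) 1.
Proof.
  induction c as [|c IH].
  - apply is_lim_seq_ext with (fun _ => 1); [|apply is_lim_seq_const].
    intros q. unfold fact_ratio. rewrite Nat.add_0_r. simpl.
    pose proof (fct_gt0 q). field. lra.
  - apply is_lim_seq_ext_loc with (fun q => fact_ratio c q * (1 + INR (S c) * / (1 * INR q + 0))).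
    + exists 1%nat. intros q Hq. unfold fact_ratio.
      replace (q + S c)%nat with (S (q + c)) by lia.
      rewrite fact_simpl, mult_INR. pose proof (fct_gt0 q). pose proof (lt_0_INR q ltac:(lia)).
      assert (INR q ^ c <> 0) by (apply pow_nonzero; lra).
      rewrite !S_INR, plus_INR. simpl pow. field. repeat split; lra.
    + replace (Finite 1) with (Finite (1 * (1 + INR (S c) * 0))) by (f_equal; ring).
      apply is_lim_seq_mult'; [exact IH|].
      apply is_lim_seq_plus'; [apply is_lim_seq_const|].
      apply is_lim_seq_mult'; [apply is_lim_seq_const | apply is_lim_seq_inv_affine; lra].
Qed.

Lemma fact_ratio_double_lim c : is_lim_seq (fun q => fact_ratio c (2 * q)) 1.
Proof.
  apply (is_lim_seq_ext (fun q => fact_ratio c (2 * q + 0)));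
    [intros; now rewrite Nat.add_0_r|].
  apply is_lim_seq_affine_subseq; [lia | apply fact_ratio_lim].
Qed.

(* [beta_inv a b] = 1 / B(a + 1, b + 1), see [Beta_S_S]. *)
Definition beta_inv (a b : nat) : R := fct (a + b + 1) / (fct a * fct b).

(* P[X_t = Y_t] for the chain from (a+1, b+1) at time t = 2q + a + b + 2. *)
Lemma polya_diag a b q :
  polya (2 * q + S a + S b) (S a) (S b) (q + S b) =
  fct (2 * q + (a + b + 2)) * fct (q + (a + b + 1)) * fct (q + (a + b + 1)) * fct (a + b + 1)
  / (fct (q + (b + 1)) * fct (q + (a + 1)) * fct (2 * q + (2 * a + 2 * b + 3)) * fct a * fct b).
Proof.
  rewrite polya_closed by lia. unfold Binomial.C.
  pose proof (rising_fact a (q + S b)) as H1.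
  pose proof (rising_fact b (2 * q + S a + S b - (q + S b))) as H2.
  pose proof (rising_fact (a + S b) (2 * q + S a + S b)) as H3.
  replace (S a + S b)%nat with (S (a + S b)) by lia.
  replace (2 * q + S a + S b - (q + S b))%nat with (q + (a + 1))%nat in * by lia.
  replace (2 * q + S a + S b)%nat with (2 * q + (a + b + 2))%nat in * by lia.
  replace (a + (q + S b))%nat with (q + (a + b + 1))%nat in H1 by lia.
  replace (b + (q + (a + 1)))%nat with (q + (a + b + 1))%nat in H2 by lia.
  replace (a + S b + (2 * q + (a + b + 2)))%nat with (2 * q + (2 * a + 2 * b + 3))%nat in H3 by lia.
  replace (a + S b)%nat with (a + b + 1)%nat in * by lia.
  replace (q + S b)%nat with (q + (b + 1))%nat in * by lia.
  pose proof (fct_gt0 a); pose proof (fct_gt0 b); pose proof (fct_gt0 (a + b + 1)).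
  pose proof (fct_gt0 (q + (b + 1))); pose proof (fct_gt0 (q + (a + 1))).
  pose proof (fct_gt0 (2 * q + (2 * a + 2 * b + 3))).
  replace (rising (S a) (q + (b + 1))) with (fct (q + (a + b + 1)) / fct a)
    by (rewrite <- H1; field; lra).
  replace (rising (S b) (q + (a + 1))) with (fct (q + (a + b + 1)) / fct b)
    by (rewrite <- H2; field; lra).
  replace (rising (S (a + b + 1)) (2 * q + (a + b + 2)))
    with (fct (2 * q + (2 * a + 2 * b + 3)) / fct (a + b + 1)) by (rewrite <- H3; field; lra).
  field. repeat split; lra.
Qed.

Lemma polya_diag_fact_ratio a b q : (1 <= q)%nat ->
  polya (2 * q + S a + S b) (S a) (S b) (q + S b) * INR q =
  beta_inv a b / 2 ^ (a + b + 1)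
  * (fact_ratio (a + b + 1) q * fact_ratio (a + b + 1) q * fact_ratio (a + b + 2) (2 * q)
     / (fact_ratio (b + 1) q * fact_ratio (a + 1) q * fact_ratio (2 * a + 2 * b + 3) (2 * q))).
Proof.
  intros Hq. rewrite polya_diag. unfold fact_ratio, beta_inv.
  rewrite mult_INR. simpl (INR 2).
  pose proof (lt_0_INR q ltac:(lia)).
  replace (2 * a + 2 * b + 3)%nat with (a + a + (b + b) + 3)%nat by lia.
  rewrite !Rpow_mult_distr, !pow_add. simpl pow.
  pose proof (fct_gt0 a); pose proof (fct_gt0 b); pose proof (fct_gt0 (a + b + 1)).
  pose proof (fct_gt0 (q + (b + 1))); pose proof (fct_gt0 (q + (a + 1))).
  pose proof (fct_gt0 (2 * q + (a + a + (b + b) + 3))).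
  pose proof (fct_gt0 (q + (a + b + 1))); pose proof (fct_gt0 (2 * q + (a + b + 2))).
  pose proof (fct_gt0 q); pose proof (fct_gt0 (2 * q)).
  assert (INR q ^ a <> 0) by (apply pow_nonzero; lra).
  assert (INR q ^ b <> 0) by (apply pow_nonzero; lra).
  assert (2 ^ a <> 0) by (apply pow_nonzero; lra).
  assert (2 ^ b <> 0) by (apply pow_nonzero; lra).
  replace (1 + 1) with 2 by ring.
  field. repeat split; lra.
Qed.

Lemma polya_diag_lim a b :
  is_lim_seq (fun q => polya (2 * q + S a + S b) (S a) (S b) (q + S b) * INR q)
    (beta_inv a b / 2 ^ (a + b + 1)).
Proof.
  apply is_lim_seq_ext_loc with (fun q => beta_inv a b / 2 ^ (a + b + 1)
    * (fact_ratio (a + b + 1) q * fact_ratio (a + b + 1) q * fact_ratio (a + b + 2) (2 * q)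
       / (fact_ratio (b + 1) q * fact_ratio (a + 1) q * fact_ratio (2 * a + 2 * b + 3) (2 * q)))).
  - exists 1%nat. intros q Hq. symmetry. apply polya_diag_fact_ratio. lia.
  - replace (Finite (beta_inv a b / 2 ^ (a + b + 1)))
      with (Finite (beta_inv a b / 2 ^ (a + b + 1) * (1 * 1 * 1 / (1 * 1 * 1))))
      by (f_equal; field; apply pow_nonzero; lra).
    apply is_lim_seq_mult'; [apply is_lim_seq_const|].
    apply is_lim_seq_div'; [| |lra];
      repeat apply is_lim_seq_mult'; apply fact_ratio_lim || apply fact_ratio_double_lim.
Qed.

Lemma central_shift_sqrt_lim n : is_lim_seq (fun q => central (q + n) * sqrt (INR q)) (/ sqrt PI).
Proof.
  apply is_lim_seq_ext_loc with
    (fun q => central (1 * q + n) * sqrt (INR (1 * q + n))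
              * sqrt (1 - INR n * / (1 * INR q + INR n))).
  - exists 1%nat. intros q Hq. rewrite Nat.mul_1_l, plus_INR.
    pose proof (lt_0_INR q ltac:(lia)). pose proof (pos_INR n).
    rewrite Rmult_assoc, <- sqrt_mult_alt by lra.
    do 2 f_equal. field. lra.
  - replace (Finite (/ sqrt PI)) with (Finite (/ sqrt PI * sqrt (1 - INR n * 0)))
      by (f_equal; rewrite Rmult_0_r, Rminus_0_r, sqrt_1; ring).
    apply is_lim_seq_mult'.
    + apply (is_lim_seq_affine_subseq (fun k => central k * sqrt (INR k))); [lia|].
      apply central_sqrt_lim.
    + apply is_lim_seq_sqrt, is_lim_seq_minus'; [apply is_lim_seq_const|].
      apply is_lim_seq_mult'; [apply is_lim_seq_const | apply is_lim_seq_inv_affine; lra].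
Qed.

Lemma diag_defect_lim a b :
  is_lim_seq (fun q => expect (2 * q + S a + S b) diag_defect (S a) (S b) * (INR q * sqrt (INR q)))
    (beta_inv a b / 2 ^ (a + b + 1) / sqrt PI).
Proof.
  apply is_lim_seq_ext with (fun q =>
    (polya (2 * q + S a + S b) (S a) (S b) (q + S b) * INR q)
    * (central (q + (S a + S b)) * sqrt (INR q))).
  - intros q. rewrite (expect_diag_defect_at _ _ _ (q + S b)) by lia.
    replace (S a + (q + S b))%nat with (q + (S a + S b))%nat by lia. ring.
  - apply is_lim_seq_mult'; [apply polya_diag_lim | apply central_shift_sqrt_lim].
Qed.

(** * Tails of series with increments of order q^(-3/2) *)

Lemma nonincr_lim_0_ge0 (G : nat -> R) M :
  (forall q, (M <= q)%nat -> G (S q) <= G q) -> is_lim_seq G 0 ->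
  forall q, (M <= q)%nat -> 0 <= G q.
Proof.
  intros Hm Hl q Hq. destruct (Rle_or_lt 0 (G q)) as [|Hneg]; [assumption|].
  assert (Hp : 0 < - G q) by lra.
  apply is_lim_seq_spec in Hl. destruct (Hl (mkposreal _ Hp)) as [N HN].
  assert (HQ : forall k, G (q + k)%nat <= G q).
  { induction k as [|k IH]; [rewrite Nat.add_0_r; lra|].
    replace (q + S k)%nat with (S (q + k)) by lia. pose proof (Hm (q + k)%nat ltac:(lia)). lra. }
  specialize (HN (q + N)%nat ltac:(lia)). specialize (HQ N). simpl in HN.
  rewrite Rminus_0_r in HN. apply Rabs_def2 in HN. lra.
Qed.

Lemma inv_sqrt_diff q : 0 < q ->
  / sqrt q - / sqrt (q + 1) = / (sqrt q * sqrt (q + 1) * (sqrt q + sqrt (q + 1))).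
Proof.
  intros Hq. pose proof (sqrt_lt_R0 q Hq). pose proof (sqrt_lt_R0 (q + 1) ltac:(lra)).
  pose proof (sqrt_sqrt q ltac:(lra)). pose proof (sqrt_sqrt (q + 1) ltac:(lra)).
  set (s := sqrt q) in *. set (r := sqrt (q + 1)) in *.
  apply (Rmult_eq_reg_r (s * r * (s + r))); [|nra].
  rewrite Rinv_l by nra. field_simplify; lra.
Qed.

Lemma inv_sqrt_diff_bounds q : 0 < q ->
  / (2 * (q + 1) * sqrt (q + 1)) <= / sqrt q - / sqrt (q + 1) <= / (2 * q * sqrt q).
Proof.
  intros Hq. rewrite inv_sqrt_diff by exact Hq.
  pose proof (sqrt_lt_R0 q Hq). pose proof (sqrt_lt_R0 (q + 1) ltac:(lra)).
  pose proof (sqrt_sqrt q ltac:(lra)). pose proof (sqrt_sqrt (q + 1) ltac:(lra)).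
  pose proof (sqrt_le_1_alt q (q + 1) ltac:(lra)).
  set (s := sqrt q) in *. set (r := sqrt (q + 1)) in *.
  split; apply Rinv_le_contravar; nra.
Qed.

Lemma sqrt_S_div_le q : 0 < q -> sqrt (q + 1) / sqrt q <= 1 + / q.
Proof.
  intros Hq. pose proof (sqrt_lt_R0 q Hq). pose proof (sqrt_lt_R0 (q + 1) ltac:(lra)).
  pose proof (sqrt_sqrt q ltac:(lra)). pose proof (sqrt_sqrt (q + 1) ltac:(lra)).
  set (s := sqrt q) in *. set (r := sqrt (q + 1)) in *.
  apply Rmult_le_reg_r with (s * q); [nra|].
  replace (r / s * (s * q)) with (r * q) by (field; lra).
  replace ((1 + / q) * (s * q)) with (s * (q + 1)) by (field; lra).
  nra.
Qed.

Lemma inv_sqrt_INR_lim : is_lim_seq (fun q => / sqrt (INR q)) 0.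
Proof.
  replace (Finite 0) with (Rbar_inv p_infty) by reflexivity.
  apply is_lim_seq_inv; [|discriminate].
  eapply filterlim_comp; [apply is_lim_seq_INR | apply filterlim_sqrt_p].
Qed.

Section TailAsymptotics.

Variables u d : nat -> R.
Hypothesis u_telescope : forall q, u q = d q + u (S q).
Hypothesis u_lim : is_lim_seq u 0.

(* If the increments are at most c q^(-3/2), the tail is at most
   c sum_(k > q) k^(-3/2) <= 2c / sqrt q. *)
Lemma tail_upper_bound c N : 0 <= c ->
  (forall q, (N <= q)%nat -> (1 <= q)%nat -> d q <= c / (INR q * sqrt (INR q))) ->
  forall q, (S N <= q)%nat -> u (S q) <= 2 * c / sqrt (INR q).
Proof.
  intros Hc Hd q Hq.
  enough (0 <= 2 * c / sqrt (INR q) - u (S q)) by lra.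
  apply (nonincr_lim_0_ge0 (fun q => 2 * c / sqrt (INR q) - u (S q)) (S N)); [| |exact Hq].
  - intros k Hk. rewrite (u_telescope (S k)), S_INR.
    pose proof (lt_0_INR k ltac:(lia)) as Hk0.
    pose proof (inv_sqrt_diff_bounds (INR k) Hk0) as [Hlow _].
    pose proof (Hd (S k) ltac:(lia) ltac:(lia)) as Hb. rewrite S_INR in Hb.
    pose proof (sqrt_lt_R0 (INR k + 1) ltac:(lra)).
    assert (d (S k) <= 2 * c * (/ sqrt (INR k) - / sqrt (INR k + 1))).
    { eapply Rle_trans; [exact Hb|].
      replace (c / ((INR k + 1) * sqrt (INR k + 1)))
        with (2 * c * / (2 * (INR k + 1) * sqrt (INR k + 1))) by (field; lra).
      apply Rmult_le_compat_l; lra. }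
    unfold Rdiv in *. lra.
  - replace (Finite 0) with (Finite (2 * c * 0 - 0)) by (f_equal; ring).
    apply is_lim_seq_minus'; [|now apply (is_lim_seq_incr_1 u)].
    apply is_lim_seq_mult'; [apply is_lim_seq_const | apply inv_sqrt_INR_lim].
Qed.

Lemma tail_lower_bound c N : 0 <= c ->
  (forall q, (N <= q)%nat -> (1 <= q)%nat -> c / (INR q * sqrt (INR q)) <= d q) ->
  forall q, (S N <= q)%nat -> 2 * c / sqrt (INR q) <= u q.
Proof.
  intros Hc Hd q Hq.
  enough (0 <= u q - 2 * c / sqrt (INR q)) by lra.
  apply (nonincr_lim_0_ge0 (fun q => u q - 2 * c / sqrt (INR q)) (S N)); [| |exact Hq].
  - intros k Hk. rewrite (u_telescope k), S_INR.
    pose proof (lt_0_INR k ltac:(lia)) as Hk0.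
    pose proof (inv_sqrt_diff_bounds (INR k) Hk0) as [_ Hup].
    pose proof (Hd k ltac:(lia) ltac:(lia)) as Hb.
    pose proof (sqrt_lt_R0 (INR k) Hk0).
    assert (2 * c * (/ sqrt (INR k) - / sqrt (INR k + 1)) <= d k).
    { eapply Rle_trans; [|exact Hb].
      replace (c / (INR k * sqrt (INR k))) with (2 * c * / (2 * INR k * sqrt (INR k)))
        by (field; lra).
      apply Rmult_le_compat_l; lra. }
    unfold Rdiv in *. lra.
  - replace (Finite 0) with (Finite (0 - 2 * c * 0)) by (f_equal; ring).
    apply is_lim_seq_minus'; [exact u_lim|].
    apply is_lim_seq_mult'; [apply is_lim_seq_const | apply inv_sqrt_INR_lim].
Qed.

Lemma tail_sqrt_lim L : 0 < L ->
  is_lim_seq (fun q => d q * (INR q * sqrt (INR q))) L ->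
  is_lim_seq (fun q => u q * sqrt (INR q)) (2 * L).
Proof.
  intros HL HdL. apply is_lim_seq_spec. intros eps. pose proof (cond_pos eps).
  set (e := Rmin (eps / 8) (L / 2)).
  assert (He : 0 < e) by (apply Rmin_pos; lra).
  assert (He1 : e <= eps / 8) by apply Rmin_l.
  assert (He2 : e <= L / 2) by apply Rmin_r.
  apply is_lim_seq_spec in HdL. destruct (HdL (mkposreal e He)) as [N1 HN1]. simpl in HN1.
  assert (Hd : forall q, (N1 <= q)%nat -> (1 <= q)%nat ->
            (L - e) / (INR q * sqrt (INR q)) <= d q <= (L + e) / (INR q * sqrt (INR q))).
  { intros q Hq Hq1. specialize (HN1 q Hq). apply Rabs_def2 in HN1.
    pose proof (lt_0_INR q ltac:(lia)). pose proof (sqrt_lt_R0 (INR q) ltac:(lra)).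
    split; apply Rmult_le_reg_r with (INR q * sqrt (INR q)); try nra;
      unfold Rdiv; rewrite Rmult_assoc, Rinv_l by nra; lra. }
  pose proof (tail_upper_bound (L + e) N1 ltac:(lra) (fun q H1 H2 => proj2 (Hd q H1 H2))) as Hup.
  pose proof (tail_lower_bound (L - e) N1 ltac:(lra) (fun q H1 H2 => proj1 (Hd q H1 H2))) as Hlow.
  destruct (archimed_cor1 (eps / (4 * (L + e)))) as [N2 [HN2 HN2']].
  { apply Rdiv_lt_0_compat; lra. }
  exists (N1 + N2 + 2)%nat. intros [|q] Hn; [lia|].
  pose proof (lt_0_INR q ltac:(lia)) as Hq0. pose proof (lt_0_INR (S q) ltac:(lia)).
  pose proof (sqrt_lt_R0 _ Hq0). pose proof (sqrt_lt_R0 (INR (S q)) ltac:(lra)).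
  apply Rabs_def1.
  - pose proof (Hup q ltac:(lia)) as Hb1.
    pose proof (sqrt_S_div_le (INR q) Hq0) as Hb2. rewrite <- S_INR in Hb2.
    assert (/ INR q <= / INR N2)
      by (apply Rinv_le_contravar; [apply lt_0_INR; lia | apply le_INR; lia]).
    assert (u (S q) * sqrt (INR (S q)) <= 2 * (L + e) * (1 + / INR q)).
    { apply Rle_trans with (2 * (L + e) * (sqrt (INR (S q)) / sqrt (INR q))).
      - apply Rmult_le_compat_r with (r := sqrt (INR (S q))) in Hb1; [|lra].
        unfold Rdiv in *. lra.
      - apply Rmult_le_compat_l; lra. }
    assert (2 * (L + e) * / INR q < eps / 2).
    { apply Rle_lt_trans with (2 * (L + e) * / INR N2); [apply Rmult_le_compat_l; lra|].
      apply Rmult_lt_compat_l with (r := 2 * (L + e)) in HN2; [|lra].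
      replace (2 * (L + e) * (eps / (4 * (L + e)))) with (eps / 2) in HN2 by (field; lra).
      exact HN2. }
    lra.
  - pose proof (Hlow (S q) ltac:(lia)) as Hb1.
    apply Rmult_le_compat_r with (r := sqrt (INR (S q))) in Hb1; [|lra].
    unfold Rdiv in Hb1. rewrite Rmult_assoc, Rinv_l in Hb1 by lra. lra.
Qed.

End TailAsymptotics.

(** * Beta integrals *)

Definition beta_int (p q : nat) : R := RInt (fun s => s ^ p * (1 - s) ^ q) 0 1.

Lemma ex_RInt_beta p q : ex_RInt (fun s => s ^ p * (1 - s) ^ q) 0 1.
Proof.
  apply (@ex_RInt_continuous R_CompleteNormedModule). intros z _.
  apply (@ex_derive_continuous R_AbsRing R_NormedModule). auto_derive. trivial.
Qed.

Lemma beta_int_0 p : beta_int p 0 = / INR (S p).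
Proof.
  unfold beta_int. apply is_RInt_unique.
  pose proof (lt_0_INR (S p) ltac:(lia)).
  replace (/ INR (S p))
    with (minus ((fun s => s ^ S p / INR (S p)) 1) ((fun s => s ^ S p / INR (S p)) 0))
    by (cbv beta; rewrite pow1, pow_i by lia; unfold minus, plus, opp; cbn -[INR]; field; lra).
  apply (@is_RInt_derive R_CompleteNormedModule (fun s => s ^ S p / INR (S p))).
  - intros x _. auto_derive; [trivial|].
    replace (match p with O => 1 | S _ => INR p + 1 end) with (INR (S p))
      by (rewrite S_INR; destruct p; simpl; ring).
    rewrite pow_O. field. lra.
  - intros x _. apply (@ex_derive_continuous R_AbsRing R_NormedModule). auto_derive. trivial.
Qed.

(* Integration by parts against the primitive [s ^ (p+1) (1 - s) ^ (q+1)]. *)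
Lemma beta_int_S_S p q : INR (S p) * beta_int p (S q) = INR (S q) * beta_int (S p) q.
Proof.
  set (F s := INR (S p) * (s ^ p * (1 - s) ^ S q) - INR (S q) * (s ^ S p * (1 - s) ^ q)).
  assert (H0 : is_RInt F 0 1 0).
  { assert (HH := @is_RInt_derive R_CompleteNormedModule
                    (fun s => s ^ S p * (1 - s) ^ S q) F 0 1).
    replace (minus _ _) with 0 in HH by (simpl; unfold minus, plus, opp; simpl; ring).
    apply HH.
    - intros x _. unfold F. auto_derive; [trivial|].
      rewrite !S_INR. simpl.
      replace (match p with O => 1 | S _ => INR p + 1 end) with (INR p + 1)
        by (destruct p; simpl; ring).
      replace (match q with O => 1 | S _ => INR q + 1 end) with (INR q + 1)
        by (destruct q; simpl; ring).
      replace (1 + - x) with (1 - x) by ring. ring.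
    - intros x _. apply (@ex_derive_continuous R_AbsRing R_NormedModule).
      unfold F. auto_derive. trivial. }
  assert (H1 : is_RInt F 0 1 (INR (S p) * beta_int p (S q) - INR (S q) * beta_int (S p) q)).
  { apply (is_RInt_minus (fun s => INR (S p) * (s ^ p * (1 - s) ^ S q))
                         (fun s => INR (S q) * (s ^ S p * (1 - s) ^ q))).
    - apply (is_RInt_scal (fun s => s ^ p * (1 - s) ^ S q)).
      apply (@RInt_correct R_CompleteNormedModule), ex_RInt_beta.
    - apply (is_RInt_scal (fun s => s ^ S p * (1 - s) ^ q)).
      apply (@RInt_correct R_CompleteNormedModule), ex_RInt_beta. }
  pose proof (is_RInt_unique _ _ _ _ H0). pose proof (is_RInt_unique _ _ _ _ H1). lra.
Qed.

Lemma beta_int_fact q : forall p, beta_int p q = fct p * fct q / fct (p + q + 1).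
Proof.
  induction q as [|q IH]; intros p.
  - rewrite beta_int_0, Nat.add_0_r, Nat.add_1_r, fact_simpl, mult_INR.
    change (fct 0) with 1. pose proof (fct_gt0 p). pose proof (lt_0_INR (S p) ltac:(lia)).
    field. lra.
  - pose proof (beta_int_S_S p q) as H. rewrite IH in H.
    pose proof (lt_0_INR (S p) ltac:(lia)).
    apply (Rmult_eq_reg_l (INR (S p))); [|lra]. rewrite H.
    replace (S p + q + 1)%nat with (p + S q + 1)%nat by lia.
    rewrite (fact_simpl p), (fact_simpl q), !mult_INR.
    pose proof (fct_gt0 p); pose proof (fct_gt0 q); pose proof (fct_gt0 (p + S q + 1)).
    field. lra.
Qed.

Lemma Beta_S_S a b : Beta (S a) (S b) = / beta_inv a b.
Proof.
  unfold Beta, beta_inv. simpl (S a - 1)%nat. simpl (S b - 1)%nat. rewrite !Nat.sub_0_r.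
  fold (beta_int a b). rewrite beta_int_fact.
  pose proof (fct_gt0 a); pose proof (fct_gt0 b); pose proof (fct_gt0 (a + b + 1)).
  field. repeat split; lra.
Qed.

Lemma Rpower_2_sub_5_2 n : Rpower 2 (INR n - 5 / 2) = 2 ^ n / (4 * sqrt 2).
Proof.
  replace (INR n - 5 / 2) with (INR n + - (INR 2 + / 2)) by (simpl; field).
  rewrite Rpower_plus, Rpower_Ropp, Rpower_plus, !Rpower_pow, Rpower_sqrt by lra.
  simpl. pose proof (sqrt_lt_R0 2 ltac:(lra)). field. lra.
Qed.

(** * The tail of T *)

Lemma is_lim_seq_parity (f : nat -> R) c (l : Rbar) :
  is_lim_seq (fun q => f (2 * q + c)%nat) l -> is_lim_seq (fun q => f (S (2 * q + c))) l ->
  is_lim_seq f l.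
Proof.
  intros Heven Hodd P HP.
  destruct (Heven P HP) as [N1 HN1]. destruct (Hodd P HP) as [N2 HN2].
  exists (2 * (N1 + N2) + c)%nat. intros n Hn.
  destruct (Nat.Even_or_Odd (n - c)) as [[q Hq]|[q Hq]].
  - replace n with (2 * q + c)%nat by lia. apply HN1. lia.
  - replace n with (S (2 * q + c)) by lia. apply HN2. lia.
Qed.

Lemma is_lim_seq_sqrt_double (v : nat -> R) (M c : R) : 0 <= c ->
  is_lim_seq (fun q => v q * sqrt (INR q)) M ->
  is_lim_seq (fun q => v q * sqrt (2 * INR q + c)) (M * sqrt 2).
Proof.
  intros Hc Hv.
  apply is_lim_seq_ext_loc with (fun q => v q * sqrt (INR q) * sqrt (2 + c * / (1 * INR q + 0))).
  - exists 1%nat. intros q Hq. pose proof (lt_0_INR q ltac:(lia)).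
    assert (0 <= c * / (1 * INR q + 0))
      by (apply Rmult_le_pos; [lra | left; apply Rinv_0_lt_compat; lra]).
    rewrite Rmult_assoc, <- sqrt_mult_alt by lra. do 2 f_equal. field. lra.
  - replace (M * sqrt 2) with (M * sqrt (2 + c * 0)) by (rewrite Rmult_0_r, Rplus_0_r; reflexivity).
    apply is_lim_seq_mult'; [exact Hv|].
    apply is_lim_seq_sqrt, (is_lim_seq_plus' (fun _ => 2) (fun q => c * / (1 * INR q + 0)));
      [apply is_lim_seq_const|].
    apply is_lim_seq_mult'; [apply is_lim_seq_const | apply is_lim_seq_inv_affine; lra].
Qed.

Section DiagonalStart.

Variables a b : nat.

(* Diagonal visits from (a+1, b+1) happen only at the times 2q + a + b + 2. *)
Let hit_after_even q := hit_after (2 * q + S a + S b) (S a) (S b).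

Lemma hit_after_odd_time q :
  hit_after (S (2 * q + S a + S b)) (S a) (S b) = hit_after_even (S q).
Proof.
  pose proof (hit_after_drop (S (2 * q + S a + S b)) (S a) (S b) ltac:(lia) ltac:(lia)) as H.
  rewrite expect_diag_defect_none in H by (intros; lia).
  unfold hit_after_even.
  replace (2 * S q + S a + S b)%nat with (S (S (2 * q + S a + S b))) by lia. lra.
Qed.

Lemma hit_after_even_telescope q :
  hit_after_even q
  = expect (2 * q + S a + S b) diag_defect (S a) (S b) + hit_after_even (S q).
Proof.
  pose proof (hit_after_drop (2 * q + S a + S b) (S a) (S b) ltac:(lia) ltac:(lia)).
  rewrite <- hit_after_odd_time. unfold hit_after_even. lra.
Qed.

Lemma hit_after_even_lim : is_lim_seq hit_after_even 0.
Proof.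
  apply (is_lim_seq_ext (fun q => hit_after (2 * q + (S a + S b)) (S a) (S b))).
  - intros q. unfold hit_after_even. now rewrite Nat.add_assoc.
  - apply (is_lim_seq_affine_subseq (fun t => hit_after t (S a) (S b))); [lia|].
    apply hit_after_lim; lia.
Qed.

Lemma hit_after_sqrt_lim :
  is_lim_seq (fun t => hit_after t (S a) (S b) * sqrt (INR t))
    (2 * (beta_inv a b / 2 ^ (a + b + 1) / sqrt PI) * sqrt 2).
Proof.
  assert (Hu : is_lim_seq (fun q => hit_after_even q * sqrt (INR q))
                 (2 * (beta_inv a b / 2 ^ (a + b + 1) / sqrt PI))).
  { apply (tail_sqrt_lim _ _ hit_after_even_telescope hit_after_even_lim); [|apply diag_defect_lim].
    pose proof (fct_gt0 a); pose proof (fct_gt0 b); pose proof (fct_gt0 (a + b + 1)).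
    pose proof (pow_lt 2 (a + b + 1) ltac:(lra)). pose proof (sqrt_lt_R0 PI PI_RGT_0).
    unfold beta_inv. repeat apply Rdiv_lt_0_compat; nra. }
  apply (is_lim_seq_parity _ (S a + S b)).
  - apply (is_lim_seq_ext
             (fun q => hit_after_even q * sqrt (2 * INR q + INR (S a + S b)))).
    + intros q. unfold hit_after_even.
      rewrite <- Nat.add_assoc, (plus_INR (2 * q)), mult_INR. reflexivity.
    + apply is_lim_seq_sqrt_double; [apply pos_INR | exact Hu].
  - apply (is_lim_seq_ext
             (fun q => hit_after_even (S q) * sqrt (2 * INR (S q) + INR (S a + b)))).
    + intros q. rewrite Nat.add_assoc, hit_after_odd_time. f_equal. f_equal.
      rewrite !S_INR, !plus_INR, mult_INR, !S_INR, INR_0. ring.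
    + apply (is_lim_seq_incr_1
               (fun q => hit_after_even q * sqrt (2 * INR q + INR (S a + b)))).
      apply is_lim_seq_sqrt_double; [apply pos_INR | exact Hu].
Qed.

End DiagonalStart.

Theorem theorem1 (x0 y0 : nat) (hx : (1 <= x0)%nat) (hy : (1 <= y0)%nat) :
  is_lim_seq
    (fun t : nat =>
       prob_T_ge 1 x0 y0 t /
       ((1 / (Rpower 2 (INR (x0 + y0) - 5 / 2) * sqrt PI * Beta x0 y0))
          * / sqrt (INR t)))
    1.
Proof.
  destruct x0 as [|a]; [lia|]. destruct y0 as [|b]; [lia|].
  replace (S a + S b)%nat with (a + b + 2)%nat by lia.
  rewrite Rpower_2_sub_5_2, Beta_S_S.
  set (C := 2 ^ (a + b + 2) / (4 * sqrt 2) * sqrt PI * / beta_inv a b).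
  pose proof (fct_gt0 a); pose proof (fct_gt0 b); pose proof (fct_gt0 (a + b + 1)).
  pose proof (pow_lt 2 (a + b + 1) ltac:(lra)).
  pose proof (sqrt_lt_R0 PI PI_RGT_0). pose proof (sqrt_lt_R0 2 ltac:(lra)).
  assert (0 < beta_inv a b) by (unfold beta_inv; apply Rdiv_lt_0_compat; nra).
  assert (HC : 0 < C).
  { unfold C. pose proof (pow_lt 2 (a + b + 2) ltac:(lra)).
    repeat apply Rmult_lt_0_compat; try apply Rinv_0_lt_compat; lra. }
  apply is_lim_seq_ext_loc with (fun t => hit_after t (S a) (S b) * sqrt (INR t) * C).
  - exists 1%nat. intros t Ht. rewrite prob_T_ge_hit_after by lia.
    pose proof (sqrt_lt_R0 (INR t) (lt_0_INR t ltac:(lia))). field. split; lra.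
  - replace (Finite 1)
      with (Finite (2 * (beta_inv a b / 2 ^ (a + b + 1) / sqrt PI) * sqrt 2 * C)).
    + apply is_lim_seq_mult'; [apply hit_after_sqrt_lim | apply is_lim_seq_const].
    + f_equal. unfold C. replace (a + b + 2)%nat with (S (a + b + 1)) by lia. simpl pow.
      field. repeat split; lra.
Qed.
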